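(* Let $G$ be a query graph that is splittable and f-closed, with $E^i\neq\emptyset$. Then any sink $C^{sep}\in\mathrm{Eq}$ minimizing $|coupled^{\oplus}(C)|$ among all sinks $C\in\mathrm{Eq}$ is a separator.
   Context: $G=G[Q]$ is the query graph of a Boolean CQ without self-joins with atoms $R(u,v)$, $u\ne v$, first attribute the key: vertices are variables, each atom gives an edge $e_R=(u_R,v_R)$, consistent/inconsistent according to the type of $R$; $E^i$ = inconsistent edges. Paths may have zero edges. $x\to y$: a directed path from $x$ to $y$ with only consistent edges; $x\leadsto y$: any directed path; undirected paths ignore directions. For a path $P$ and vertex set $N$, $P\cap N$ is the set of vertices of $P$ (endpoints included) in $N$. $u^{\oplus}=\{v:u\to v\}$, $u^+=\{v:u\leadsto v\}$, $u^{+,R}=\{v: u\leadsto v$ in $G-\{e_R\}\}$. For $R,S\in E^i$: $R\lesssim S$ iff $u_S\in u_R^+$; $R\sim S$ iff $R\lesssim S$ and $S\lesssim R$; $[R]$ the class of $R$; $coupled^+(R)=[R]\cup\{S\in E^i:\exists$ undirected path $P$ from $v_R$ to $u_S$ with $P\cap u_R^{+,R}=\emptyset\}$; $R,S$ are coupled if $R\in coupled^+(S)$ and $S\in coupled^+(R)$; $G$ is splittable if every coupled pair $R,S$ satisfies $R\sim S$. $\mathrm{Eq}$ is the set of $\sim$-classes of $E^i$; for $C\in\mathrm{Eq}$, $C^{\oplus}=\bigcap_{R\in C}u_R^{\oplus}$ and $coupled^{\oplus}(C)=\{C\}\cup\{C'\in\mathrm{Eq}:\exists R\in C,S\in C'$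 and an undirected path $P$ from $v_R$ to $u_S$ with $P\cap C^{\oplus}=\emptyset\}$. $C_1\le^{\oplus}C_2$ iff some $S\in C_2$ has $u_S\in C_1^{\oplus}$; $C_1<^{\oplus}C_2$ iff $C_1\le^{\oplus}C_2$ and $C_1\ne C_2$ (a strict partial order). A sink is a maximal element of $<^{\oplus}$. A separator is a sink $C$ such that every $C'\in coupled^{\oplus}(C)$ with $C'\ne C$ satisfies $C'<^{\oplus}C$. $G$ is f-closed if for every $R\in E^i$, $v_R^{\oplus}\cap u_R^{+,R}\subseteq u_R^{\oplus}$. *)

From mathcomp Require Import all_boot.
Set Implicit Arguments. Unset Strict Implicit. Unset Printing Implicit Defensive.

(* A query graph: vertices V (variables), atoms A (one edge per atom, no
   self-joins so atoms = relation names), e_R = (u R, v R), inc R = R is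
   inconsistent. *)
Section QueryGraph.
Variables (V A : finType) (u v : A -> V) (inc : pred A).

Definition cedge : rel V := fun a b => [exists R, ~~ inc R && (u R == a) && (v R == b)].
Definition dedge : rel V := fun a b => [exists R, (u R == a) && (v R == b)].
Definition dedge_wo (R0 : A) : rel V :=
  fun a b => [exists R, (R != R0) && (u R == a) && (v R == b)].
Definition uedge : rel V :=
  fun a b => [exists R, ((u R == a) && (v R == b)) || ((u R == b) && (v R == a))].

Definition cpath (x y : V) : bool := connect cedge x y.
Definition dpath (x y : V) : bool := connect dedge x y.

Definition oplus (x : V) : {set V} := [set y | cpath x y].
Definition plus (x : V) : {set V} := [set y | dpath x y].
Definition plusR (x : V) (R : A) : {set V} := [set y | connect (dedge_wo R) x y].

Definition upath_avoid (N : {set V}) (x y : V) : bool :=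
  (x \notin N) &&
  connect (fun a b => (a \notin N) && (b \notin N) && uedge a b) x y.

Definition lesim (R S : A) : bool := u S \in plus (u R).
Definition sim (R S : A) : bool := lesim R S && lesim S R.

Definition cls (R : A) : {set A} := [set S | inc S && sim R S].

Definition coupled_plus (R : A) : {set A} :=
  cls R :|: [set S | inc S && upath_avoid (plusR (u R) R) (v R) (u S)].

Definition coupled (R S : A) : bool :=
  (R \in coupled_plus S) && (S \in coupled_plus R).

Definition splittable : Prop :=
  forall R S, inc R -> inc S -> coupled R S -> sim R S.

Definition f_closed : Prop :=
  forall R, inc R -> oplus (v R) :&: plusR (u R) R \subset oplus (u R).

Definition Eqc : {set {set A}} := [set cls R | R in [set R | inc R]].

Definition Coplus (C : {set A}) : {set V} :=
  [set x | [forall R in C, cpath (u R) x]].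

Definition coupled_oplus (C : {set A}) : {set {set A}} :=
  C |: [set C' in Eqc |
         [exists R in C, exists S in C', upath_avoid (Coplus C) (v R) (u S)]].

Definition le_oplus (C1 C2 : {set A}) : bool :=
  [exists S in C2, u S \in Coplus C1].
Definition lt_oplus (C1 C2 : {set A}) : bool := le_oplus C1 C2 && (C1 != C2).

Definition sink (C : {set A}) : bool :=
  (C \in Eqc) && [forall C' in Eqc, ~~ lt_oplus C C'].

Definition separator (C : {set A}) : bool :=
  sink C && [forall C' in coupled_oplus C, (C' != C) ==> lt_oplus C' C].

End QueryGraph.

From mathcomp Require Import all_boot.
Set Implicit Arguments. Unset Strict Implicit. Unset Printing Implicit Defensive.

(* Write N_E for u_E^{+,E}, the vertices reachable from
   u_E without using the edge E.

   The heart of the proof is an escape lemma: if C is a sink, R is in C and an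
   undirected path avoiding C^oplus leads from v_R to y, then for some E in C
   an undirected path avoiding N_E leads from v_E to y.  It is proved by
   following "escape edges" (edges outside [E] whose head is not in u_E^oplus)
   and uses both f-closedness and splittability.  Two consequences follow for
   distinct sinks C, D with D in coupled^oplus(C): C is not in
   coupled^oplus(D) (otherwise the escape lemma would couple an edge of C with
   an edge of D), and coupled^oplus(D) is included in coupled^oplus(C).
   Finally, if C_sep were not a separator, a sink D above an offending class
   would satisfy both, so coupled^oplus(D) would be strictly smaller than
   coupled^oplus(C_sep), contradicting minimality. *)

Lemma connect_ind_last (T : finType) (e : rel T) (x : T) (P : T -> Prop) :
  P x -> (forall y z, connect e x y -> P y -> e y z -> P z) ->
  forall y, connect e x y -> P y.
Proof.
move=> Px IH y /connectP [p]; elim/last_ind: p y => [|p z IHp] y /=.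
  by move=> _ ->.
rewrite rcons_path last_rcons => /andP [pp ez] ->.
apply: (IH (last x p)) => //; first by apply/connectP; exists p.
exact: IHp.
Qed.

Lemma connect_ind_first (T : finType) (e : rel T) (t : T) (P : T -> Prop) :
  P t -> (forall x y, e x y -> connect e y t -> P y -> P x) ->
  forall x, connect e x t -> P x.
Proof.
move=> Pt IH x /connectP [p]; elim: p x => [|y p IHp] x /=.
  by move=> _ Et; rewrite -Et.
move=> /andP [exy py] Et; apply: (IH x y) => //.
  by apply/connectP; exists p.
exact: IHp.
Qed.

Section QueryGraphTheory.
Variables (V A : finType) (u v : A -> V) (inc : pred A).
Implicit Types (N : {set V}) (x y z a b w : V) (C D X : {set A}) (R S T E F : A).

Local Notation ua := (upath_avoid u v).
Local Notation cp := (cpath u v inc).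
Local Notation dp := (dpath u v).
Local Notation ced := (cedge u v inc).
Local Notation ded := (dedge u v).
Local Notation wo := (dedge_wo u v).
Local Notation N_ E := (plusR u v (u E) E).
Local Notation Cop C := (Coplus u v inc C).
Local Notation cop C := (coupled_oplus u v inc C).
Local Notation Classes := (Eqc u v inc).

Definition avoid_rel N : rel V :=
  fun a b => (a \notin N) && (b \notin N) && uedge u v a b.

Lemma upath_avoidE N x y : ua N x y = (x \notin N) && connect (avoid_rel N) x y.
Proof. by []. Qed.

Lemma uedge_sym : symmetric (uedge u v).
Proof. by move=> a b; apply: eq_existsb => R; rewrite orbC. Qed.

Lemma avoid_rel_sym N : symmetric (avoid_rel N).
Proof. by move=> a b; rewrite /avoid_rel uedge_sym (andbC (a \notin N)). Qed.

Lemma upath_avoid_refl N x : x \notin N -> ua N x x.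
Proof. by move=> xN; rewrite upath_avoidE xN connect0. Qed.

Lemma upath_avoid_end N x y : ua N x y -> y \notin N.
Proof.
rewrite upath_avoidE => /andP [xN].
apply: (@connect_ind_last _ _ x (fun y => y \notin N)) => //.
by move=> a b _ _ /andP [/andP []].
Qed.

Lemma upath_avoid_step N x y z : ua N x y -> uedge u v y z -> z \notin N -> ua N x z.
Proof.
move=> H yz zN; have yN := upath_avoid_end H; move: H.
rewrite !upath_avoidE => /andP [-> c].
by apply: (connect_trans c); apply: connect1; rewrite /avoid_rel yN zN.
Qed.

Lemma upath_avoid_trans N x y z : ua N x y -> ua N y z -> ua N x z.
Proof.
rewrite !upath_avoidE => /andP [-> c1] /andP [_ c2].
by rewrite (connect_trans c1 c2).
Qed.

Lemma upath_avoid_sym N x y : ua N x y -> ua N y x.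
Proof.
move=> H; have yN := upath_avoid_end H; move: H.
rewrite !upath_avoidE => /andP [_ c].
by rewrite yN (sym_connect_sym (@avoid_rel_sym N)).
Qed.

Lemma upath_avoid_transfer N N' x y : ua N x y ->
  (forall z, ua N x z -> z \notin N') -> ua N' x y.
Proof.
move=> H HN; have xN : x \notin N by move: H; rewrite upath_avoidE => /andP [].
move: H; rewrite upath_avoidE => /andP [_].
apply: (@connect_ind_last _ _ x (fun y => ua N' x y)).
  by apply: upath_avoid_refl; apply: HN; apply: upath_avoid_refl.
move=> a b cab Ha /andP [/andP [aN bN] ab].
have Hxa : ua N x a by rewrite upath_avoidE xN.
apply: (upath_avoid_step Ha ab); exact: HN (upath_avoid_step Hxa ab bN).
Qed.

Lemma upath_avoid_of_connect (e : rel V) N a b :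
  (forall x y, e x y -> uedge u v x y) -> connect e a b ->
  (forall z, connect e a z -> connect e z b -> z \notin N) -> ua N a b.
Proof.
move=> eu cab HN.
suff: connect e b b -> ua N a b by apply; exact: connect0.
move: b cab HN; apply: (@connect_ind_last _ _ a (fun b =>
  (forall z, connect e a z -> connect e z b -> z \notin N) ->
  connect e b b -> ua N a b)).
  by move=> HN _; apply: upath_avoid_refl; apply: HN; exact: connect0.
move=> y z cay IH ez HN _.
apply: upath_avoid_step (eu _ _ ez) _; last first.
  by apply: HN (connect0 e z); apply: connect_trans cay (connect1 ez).
apply: IH (connect0 e y) => w c1 c2; apply: HN c1 _.
exact: connect_trans c2 (connect1 ez).
Qed.

Lemma upath_avoid_closed (e : rel V) N a b :
  (forall x y, e x y -> uedge u v x y) ->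
  (forall x y, x \in N -> e x y -> y \in N) ->
  connect e a b -> b \notin N -> ua N a b.
Proof.
move=> eu closedN cab bN; apply: (upath_avoid_of_connect eu cab) => z _ czb.
apply: contra bN => zN; move: czb.
by apply: (@connect_ind_last _ _ z (fun y => y \in N)) => // x y _; exact: closedN.
Qed.

Lemma dedgeP a b : reflect (exists R, u R = a /\ v R = b) (ded a b).
Proof.
apply: (iffP existsP) => [[R /andP [/eqP <- /eqP <-]]|[R [<- <-]]]; exists R => //.
by rewrite !eqxx.
Qed.

Lemma cedgeP a b : reflect (exists R, [/\ ~~ inc R, u R = a & v R = b]) (ced a b).
Proof.
apply: (iffP existsP) => [[R /andP [/andP [iR /eqP <-] /eqP <-]]|[R [iR <- <-]]].
  by exists R.
by exists R; rewrite iR !eqxx.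
Qed.

Lemma dedge_woP E a b : reflect (exists R, [/\ R != E, u R = a & v R = b]) (wo E a b).
Proof.
apply: (iffP existsP) => [[R /andP [/andP [iR /eqP <-] /eqP <-]]|[R [iR <- <-]]].
  by exists R.
by exists R; rewrite iR !eqxx.
Qed.

Lemma edge_dedge R : ded (u R) (v R).
Proof. by apply/dedgeP; exists R. Qed.

Lemma edge_uedge R : uedge u v (u R) (v R).
Proof. by apply/existsP; exists R; rewrite !eqxx. Qed.

Lemma dedge_uedge a b : ded a b -> uedge u v a b.
Proof. by case/dedgeP => R [<- <-]; apply: edge_uedge. Qed.

Lemma cedge_dedge a b : ced a b -> ded a b.
Proof. by case/cedgeP => R [_ <- <-]; apply: edge_dedge. Qed.

Lemma cedge_uedge a b : ced a b -> uedge u v a b.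
Proof. by move/cedge_dedge/dedge_uedge. Qed.

Lemma wo_dedge E a b : wo E a b -> ded a b.
Proof. by case/dedge_woP => R [_ <- <-]; apply: edge_dedge. Qed.

Lemma wo_uedge E a b : wo E a b -> uedge u v a b.
Proof. by move/wo_dedge/dedge_uedge. Qed.

Lemma cedge_wo F a b : inc F -> ced a b -> wo F a b.
Proof.
move=> iF /cedgeP [R [iR <- <-]]; apply/dedge_woP; exists R; split => //.
by apply: contraNneq iR => ->.
Qed.

Lemma cpath_dpath x y : cp x y -> dp x y.
Proof. by apply: connect_sub => a b /cedge_dedge/connect1. Qed.

Lemma wo_dpath E x y : connect (wo E) x y -> dp x y.
Proof. by apply: connect_sub => a b /wo_dedge/connect1. Qed.

Lemma oplusE x y : (y \in oplus u v inc x) = cp x y.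
Proof. by rewrite inE. Qed.

Lemma plusE x y : (y \in plus u v x) = dp x y.
Proof. by rewrite inE. Qed.

Lemma plusRE x E y : (y \in plusR u v x E) = connect (wo E) x y.
Proof. by rewrite inE. Qed.

Lemma CoplusP C x : reflect (forall R, R \in C -> cp (u R) x) (x \in Cop C).
Proof. by rewrite inE; apply: (iffP forall_inP). Qed.

Lemma Coplus_closed C x y : x \in Cop C -> cp x y -> y \in Cop C.
Proof.
move=> /CoplusP H cxy; apply/CoplusP => R RC; exact: connect_trans (H R RC) cxy.
Qed.

Lemma cpath_avoid_Coplus C a b : cp a b -> b \notin Cop C -> ua (Cop C) a b.
Proof.
apply: (upath_avoid_closed cedge_uedge) => x y xC xy.
exact: Coplus_closed xC (connect1 xy).
Qed.

Lemma connect_wo_split E F z w : connect (wo E) z w ->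
  connect (wo F) z w \/ connect (wo E) z (u F).
Proof.
apply: (@connect_ind_last _ _ z (fun w =>
  connect (wo F) z w \/ connect (wo E) z (u F))); first by left; exact: connect0.
move=> y w' czy IH /dedge_woP [R [RE uR vR]].
case: (eqVneq R F) => [RF|RF]; first by right; rewrite -RF uR.
case: IH => h; last by right.
by left; apply: connect_trans h (connect1 _); apply/dedge_woP; exists R.
Qed.

Lemma dpath_split E a b : dp a b ->
  connect (wo E) a b \/ (dp a (u E) /\ dp (v E) b).
Proof.
apply: (@connect_ind_last _ _ a (fun b =>
  connect (wo E) a b \/ (dp a (u E) /\ dp (v E) b))); first by left; exact: connect0.
move=> y w caY IH /dedgeP [R [uR vR]].
case: (eqVneq R E) => [RE|RE].
  by right; split; [rewrite -RE uR | rewrite -RE vR /dpath connect0].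
case: IH => [h|[h1 h2]].
  by left; apply: connect_trans h (connect1 _); apply/dedge_woP; exists R.
by right; split => //; apply: connect_trans h2 (connect1 _); apply/dedgeP; exists R.
Qed.

Lemma simE R S : sim u v R S = dp (u R) (u S) && dp (u S) (u R).
Proof. by rewrite /sim /lesim !plusE. Qed.

Lemma sim_refl R : sim u v R R.
Proof. by rewrite simE /dpath connect0. Qed.

Lemma sim_trans R S T : sim u v R S -> sim u v S T -> sim u v R T.
Proof.
rewrite !simE => /andP [h1 h2] /andP [h3 h4].
by apply/andP; split; [exact: connect_trans h1 h3 | exact: connect_trans h4 h2].
Qed.

Lemma clsE R S : (S \in cls u v inc R) = inc S && sim u v R S.
Proof. by rewrite inE. Qed.

Lemma cls_eq R S : sim u v R S -> cls u v inc R = cls u v inc S.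
Proof.
move=> hRS; apply/setP => T; rewrite !clsE; case: (inc T) => //=.
apply/idP/idP => h; last exact: sim_trans hRS h.
by apply: sim_trans h; rewrite /sim andbC.
Qed.

Lemma EqcP C : reflect (exists2 R, inc R & C = cls u v inc R) (C \in Classes).
Proof.
apply: (iffP imsetP) => [[R]|[R iR ->]]; first by rewrite inE => iR ->; exists R.
by exists R; rewrite ?inE.
Qed.

Lemma cls_Eqc R : inc R -> cls u v inc R \in Classes.
Proof. by move=> iR; apply/EqcP; exists R. Qed.

Lemma Eqc_mem C S : C \in Classes -> S \in C -> C = cls u v inc S /\ inc S.
Proof.
case/EqcP => R iR ->; rewrite clsE => /andP [iS hRS]; split => //; exact: cls_eq.
Qed.

Lemma Eqc_sim C R S : C \in Classes -> R \in C -> S \in C -> sim u v R S.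
Proof.
move=> HC RC SC; have [E _] := Eqc_mem HC RC.
by move: SC; rewrite E clsE => /andP [].
Qed.

Lemma Eqc_eq C D R : C \in Classes -> D \in Classes -> R \in C -> R \in D -> C = D.
Proof. by move=> HC HD RC RD; rewrite (Eqc_mem HC RC).1 (Eqc_mem HD RD).1. Qed.

Lemma Eqc_n0 C : C \in Classes -> exists R, R \in C.
Proof. by case/EqcP => R iR ->; exists R; rewrite clsE iR sim_refl. Qed.

Lemma sink_Eqc C : sink u v inc C -> C \in Classes.
Proof. by case/andP. Qed.

(* A sink contains every inconsistent edge whose tail lies in its C^oplus,
   since otherwise the class of that edge would lie strictly above it. *)
Lemma sink_absorbs C F : sink u v inc C -> inc F -> u F \in Cop C -> F \in C.
Proof.
case/andP => HC /forall_inP H iF uF.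
have := H _ (cls_Eqc iF); rewrite /lt_oplus /le_oplus.
have -> : [exists S in cls u v inc F, u S \in Cop C].
  by apply/existsP; exists F; rewrite clsE iF sim_refl uF.
by rewrite /= negbK => /eqP ->; rewrite clsE iF sim_refl.
Qed.

Lemma lt_oplus_irr C : lt_oplus u v inc C C = false.
Proof. by rewrite /lt_oplus eqxx andbF. Qed.

Lemma lt_oplus_trans C1 C2 C3 : C1 \in Classes -> C2 \in Classes ->
  lt_oplus u v inc C1 C2 -> lt_oplus u v inc C2 C3 -> lt_oplus u v inc C1 C3.
Proof.
move=> H1 H2 /andP [/existsP [S /andP [S2 uS]] ne12] /andP [/existsP [T /andP [T3 uT]] _].
have cST : cp (u S) (u T) := (CoplusP _ _ uT) S S2.
apply/andP; split.
  by apply/existsP; exists T; rewrite T3 (Coplus_closed uS cST).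
apply/negP => /eqP e13; move: T3; rewrite -e13 => T1.
have hST : sim u v S T.
  by rewrite simE (cpath_dpath cST) (cpath_dpath ((CoplusP _ _ uS) T T1)).
move/negP: ne12; apply; apply/eqP.
by rewrite (Eqc_mem H1 T1).1 (Eqc_mem H2 S2).1 (cls_eq hST).
Qed.

(* Every class is a sink or lies strictly below one: take a class above it
   with the largest number of classes strictly below. *)
Lemma sink_above C : C \in Classes ->
  exists D, sink u v inc D /\ (D = C \/ lt_oplus u v inc C D).
Proof.
move=> HC.
pose above := [set D in Classes | (D == C) || lt_oplus u v inc C D].
have Cabove : C \in above by rewrite inE HC eqxx.
pose below D := #|[set D' in Classes | lt_oplus u v inc D' D]|.
case: (@arg_maxnP _ C (fun D => D \in above) below Cabove) => D.
rewrite inE => /andP [DE Dor] Dmax; exists D.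
split; last by case/orP: Dor => [/eqP ->|h]; [left|right].
rewrite /sink DE /=; apply/forall_inP => C' HC'; apply/negP => hDC'.
have C'above : C' \in above.
  rewrite inE HC'; case/orP: Dor => [/eqP DC|h]; first by rewrite -DC hDC' orbT.
  by rewrite (lt_oplus_trans HC DE h hDC') orbT.
have := Dmax C' C'above; apply/negP; rewrite -ltnNge; apply: proper_card.
apply/properP; split.
  apply/subsetP => X; rewrite !inE => /andP [XE hX].
  by rewrite XE (lt_oplus_trans XE DE hX hDC').
by exists D; rewrite !inE ?DE ?hDC' ?lt_oplus_irr.
Qed.

Lemma coupled_oplusE C X : (X \in cop C) = (X == C) ||
  ((X \in Classes) && [exists R in C, exists S in X, ua (Cop C) (v R) (u S)]).
Proof. by rewrite /coupled_oplus !inE. Qed.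

(* If some class C2 in coupled^oplus(C) is neither C nor below C, the sink
   above C2 is another sink in coupled^oplus(C): a path from C reaching u_S
   for S in C2 extends consistently to u_T for T in that sink, while avoiding
   C^oplus because C absorbs every edge with tail in C^oplus. *)
Lemma offending_sink C C2 : sink u v inc C -> C2 \in cop C -> C2 != C ->
  ~~ lt_oplus u v inc C2 C -> exists D, [/\ sink u v inc D, C != D & D \in cop C].
Proof.
move=> HS HC2 C2C nlt; have HC := sink_Eqc HS.
move: HC2; rewrite coupled_oplusE (negbTE C2C) /=.
case/andP=> C2E /exists_inP [R RC /exists_inP [S SC2 pathRS]].
have [D [HD Dor]] := sink_above C2E; have DE := sink_Eqc HD.
have CD : C != D.
  apply/eqP=> eCD; case: Dor => [DC2|]; last by rewrite -eCD (negbTE nlt).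
  by rewrite -DC2 -eCD eqxx in C2C.
exists D; split => //; rewrite coupled_oplusE eq_sym (negbTE CD) DE /=.
apply/exists_inP; exists R => //.
case: Dor => [->|/andP [/exists_inP [T TD uT] _]]; first by apply/exists_inP; exists S.
apply/exists_inP; exists T => //; apply: (upath_avoid_trans pathRS).
apply: (cpath_avoid_Coplus ((CoplusP _ _ uT) S SC2)); apply/negP => uTC.
move/negP: CD; apply; apply/eqP.
exact: Eqc_eq HC DE (sink_absorbs HS (Eqc_mem DE TD).2 uTC) TD.
Qed.

Hypothesis Hsplit : splittable u v inc.
Hypothesis Hfc : f_closed u v inc.

Lemma coupled_sim E F : inc E -> inc F ->
  ua (N_ E) (v E) (u F) -> ua (N_ F) (v F) (u E) -> sim u v E F.
Proof.
move=> iE iF h1 h2; apply: Hsplit => //.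
by rewrite /coupled /coupled_plus !inE h1 h2 iE iF !orbT.
Qed.

Lemma f_closedP R w : inc R -> cp (v R) w -> connect (wo R) (u R) w -> cp (u R) w.
Proof.
move=> iR h1 h2; have /subsetP /(_ w) := Hfc iR.
by rewrite inE !oplusE plusRE h1 h2 => /(_ isT).
Qed.

Definition escape_edge E : rel V := fun a b =>
  [exists F, (u F == a) && (v F == b) && ~~ (inc F && sim u v E F)] &&
  (b \notin oplus u v inc (u E)).

(* The invariant maintained along escape paths: the vertices of N_E that are
   consistently reachable from y are consistently reachable from u_E. *)
Definition escape_inv E y : Prop :=
  forall w, cp y w -> w \in N_ E -> cp (u E) w.

Lemma escape_inv_notin E y : escape_inv E y ->
  y \notin oplus u v inc (u E) -> y \notin N_ E.
Proof. by move=> inv; apply: contra => yN; rewrite oplusE; apply: inv yN; exact: connect0. Qed.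

Lemma escape_coupled E F w : inc F -> u F \notin N_ E ->
  cp (v F) w -> w \in N_ E -> w \notin N_ F -> ua (N_ F) (v F) (u E).
Proof.
move=> iF uFE cw wE wF.
have vFw : ua (N_ F) (v F) w.
  apply: (upath_avoid_closed cedge_uedge _ cw wF) => a b.
  by rewrite !plusRE => ca ab; apply: connect_trans ca (connect1 (cedge_wo iF ab)).
have uEw : ua (N_ F) (u E) w.
  rewrite plusRE in wE; apply: (upath_avoid_of_connect (@wo_uedge E) wE) => z c1 c2.
  apply/negP; rewrite plusRE => hz.
  case: (connect_wo_split F c2) => [h|h].
    by move/negP: wF; apply; rewrite plusRE; exact: connect_trans hz h.
  by move/negP: uFE; apply; rewrite plusRE; exact: connect_trans c1 h.
exact: upath_avoid_trans vFw (upath_avoid_sym uEw).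
Qed.

(* Crossing an escape edge F preserves the invariant: if F is inconsistent
   and breaks it, E and F are coupled, hence equivalent, which escape edges
   exclude. *)
Lemma escape_step E F : inc E -> ~~ (inc F && sim u v E F) ->
  ua (N_ E) (v E) (u F) -> escape_inv E (u F) -> escape_inv E (v F).
Proof.
move=> iE nF uaF invF w cw wE.
have uFE := upath_avoid_end uaF.
case iF: (inc F); last first.
  apply: (invF w _ wE); apply: connect_trans cw; apply: connect1.
  by apply/cedgeP; exists F; rewrite iF.
apply/negPn/negP => nEw.
case: (boolP (w \in N_ F)) => wF.
  by move/negP: nEw; apply; apply: (invF w _ wE); apply: f_closedP => //; rewrite -plusRE.
by rewrite iF (coupled_sim iE iF uaF (escape_coupled iF uFE cw wE wF)) in nF.
Qed.

Lemma escape_path E y : inc E -> v E \notin oplus u v inc (u E) ->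
  connect (escape_edge E) (v E) y -> ua (N_ E) (v E) y.
Proof.
move=> iE vEO Ey; suff: escape_inv E y /\ ua (N_ E) (v E) y by case.
move: y Ey; apply: (@connect_ind_last _ _ (v E) (fun y => escape_inv E y /\ ua (N_ E) (v E) y)).
  have inv0 : escape_inv E (v E) by move=> w cw; rewrite plusRE; apply: f_closedP.
  by split=> //; apply: upath_avoid_refl; apply: escape_inv_notin.
move=> x z _ [invx uax] /andP [/existsP [F /andP [/andP [/eqP uF /eqP vF] nF]] zO].
subst x z; have invF := escape_step iE nF uax invx.
split=> //; apply: upath_avoid_step uax (edge_uedge F) _.
exact: escape_inv_notin invF zO.
Qed.

Lemma cpath_escape E a x : cp a x -> ~~ cp (u E) x -> connect (escape_edge E) a x.
Proof.
apply: (@connect_ind_last _ _ a (fun x => ~~ cp (u E) x -> connect (escape_edge E) a x)).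
  by move=> _; exact: connect0.
move=> y z _ IH yz nEz.
have nEy : ~~ cp (u E) y by apply: contra nEz => h; exact: connect_trans h (connect1 yz).
apply: connect_trans (IH nEy) (connect1 _); case/cedgeP: yz => F [iF uF vF]; subst y z.
rewrite /escape_edge oplusE nEz andbT; apply/existsP; exists F.
by rewrite !eqxx (negbTE iF).
Qed.

(* If y is consistently reachable from u_E but not from u_E2 for some E2 in
   the class of E, then the directed path from u_E2 back to u_E crosses an
   edge E' of the class with v_E' -> y but not u_E' -> y. *)
Lemma class_exit E E2 y : E2 \in cls u v inc E -> cp (u E) y -> ~~ cp (u E2) y ->
  exists E', [/\ E' \in cls u v inc E, cp (v E') y & ~~ cp (u E') y].
Proof.
rewrite clsE simE => /andP [_ /andP [dEE2 dE2E]] cEy.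
move: (u E2) dE2E dEE2; apply: (@connect_ind_first _ _ (u E) (fun a =>
  dp (u E) a -> ~~ cp a y ->
  exists E', [/\ E' \in cls u v inc E, cp (v E') y & ~~ cp (u E') y])).
  by move=> _ /negP.
move=> a b /dedgeP [H [uH vH]] dbE IH dEa nay; subst a b.
have dEb : dp (u E) (v H) := connect_trans dEa (connect1 (edge_dedge H)).
case cHy: (cp (v H) y); last exact: IH dEb (negbT cHy).
case iH: (inc H).
  exists H; split => //; rewrite clsE iH simE dEa /=.
  exact: connect_trans (connect1 (edge_dedge H)) dbE.
move/negP: nay; case; apply: connect_trans cHy; apply: connect1.
by apply/cedgeP; exists H; rewrite iH.
Qed.

Definition escaped C y : Prop := exists E,
  [/\ E \in C, v E \notin oplus u v inc (u E) & connect (escape_edge E) (v E) y].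

Lemma escaped_of_cpath C E x : C \in Classes -> E \in C -> cp (u E) x -> x \notin Cop C ->
  escaped C x.
Proof.
move=> HC EC cEx /CoplusP xC; have [CE _] := Eqc_mem HC EC.
have [E2 E2C nE2x] : exists2 E2, E2 \in C & ~~ cp (u E2) x.
  apply/exists_inP; apply: contraT; rewrite negb_exists_in => /forall_inP H.
  by case: xC => R RC; apply/negPn; apply: H.
rewrite CE in E2C; have [E' [E'C cE'x nE'x]] := class_exit E2C cEx nE2x.
exists E'; split; first by rewrite CE.
  by rewrite oplusE; apply: contra nE'x => h; exact: connect_trans h cE'x.
exact: cpath_escape cE'x nE'x.
Qed.

Lemma escaped_head C H : C \in Classes -> H \in C -> v H \notin Cop C -> escaped C (v H).
Proof.
move=> HC HinC vHC; case: (boolP (cp (u H) (v H))) => cH.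
  exact: escaped_of_cpath HC HinC cH vHC.
by exists H; split; rewrite ?oplusE ?connect0.
Qed.

Lemma escape_cover C R y : sink u v inc C -> R \in C -> dp (u R) y -> y \notin Cop C ->
  escaped C y.
Proof.
move=> HS RC dRy yC; have HC := sink_Eqc HS.
suff : y \in Cop C \/ escaped C y by case => // yC'; rewrite yC' in yC.
move: y dRy {yC}; apply: (@connect_ind_last _ _ (u R) (fun x => x \in Cop C \/ escaped C x)).
  case: (boolP (u R \in Cop C)) => h; [by left | right].
  exact: escaped_of_cpath HC RC (connect0 _ _) h.
move=> x z _ IH /dedgeP [F [uF vF]]; subst x z.
case: (boolP (v F \in Cop C)) => vFC; [by left | right].
case: IH => [uFC | [E [EC vEO esc]]].
  case iF: (inc F); first exact: escaped_head HC (sink_absorbs HS iF uFC) vFC.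
  move/negP: vFC; case; apply: Coplus_closed uFC (connect1 _).
  by apply/cedgeP; exists F; rewrite iF.
case FE: (inc F && sim u v E F).
  by apply: (escaped_head HC _ vFC); rewrite (Eqc_mem HC EC).1 clsE.
case: (boolP (v F \in oplus u v inc (u E))) => vFO.
  by apply: escaped_of_cpath HC EC _ vFC; rewrite -oplusE.
exists E; split => //; apply: connect_trans esc (connect1 _).
by rewrite /escape_edge vFO andbT; apply/existsP; exists F; rewrite !eqxx FE.
Qed.

Lemma escape_reach C R y : sink u v inc C -> R \in C -> dp (u R) y -> y \notin Cop C ->
  exists2 E, E \in C & ua (N_ E) (v E) y.
Proof.
move=> HS RC dRy yC; have [E [EC vEO esc]] := escape_cover HS RC dRy yC.
have [_ iE] := Eqc_mem (sink_Eqc HS) EC.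
by exists E => //; apply: escape_path.
Qed.

Lemma escape_lemma C R y : sink u v inc C -> R \in C -> ua (Cop C) (v R) y ->
  exists2 E, E \in C & ua (N_ E) (v E) y.
Proof.
move=> HS RC; rewrite upath_avoidE => /andP [vRC].
apply: (@connect_ind_last _ _ (v R) (fun y => exists2 E, E \in C & ua (N_ E) (v E) y)).
  exact: escape_reach HS RC (connect1 (edge_dedge R)) vRC.
move=> x z _ [E EC uaE] /andP [/andP [_ zC] xz].
case: (boolP (dp (u R) z)) => dRz; first exact: escape_reach HS RC dRz zC.
exists E => //; apply: upath_avoid_step uaE xz _; apply: contra dRz; rewrite plusRE.
have := Eqc_sim (sink_Eqc HS) RC EC; rewrite simE => /andP [dRE _].
by move=> /wo_dpath; exact: connect_trans.
Qed.

Lemma escape_class_transfer E T T' : ~~ sim u v E T -> sim u v T T' ->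
  ua (N_ E) (v E) (u T) -> ua (N_ E) (v E) (u T').
Proof.
rewrite !simE => nET /andP [dTT' dT'T] uaT; apply: (upath_avoid_trans uaT).
apply: (upath_avoid_of_connect dedge_uedge dTT') => z dTz dzT'; apply/negP => zE.
case: (dpath_split E (connect_trans dzT' dT'T)) => [h|[dzE dET]].
  move/negP: (upath_avoid_end uaT); apply; rewrite plusRE in zE.
  by rewrite plusRE; exact: connect_trans zE h.
move/negP: nET; apply; apply/andP; split.
  exact: connect_trans (connect1 (edge_dedge E)) dET.
exact: connect_trans dTz dzE.
Qed.

Lemma coupled_oplus_escape C D : sink u v inc C -> D \in Classes -> C != D -> D \in cop C ->
  exists2 E, E \in C & forall T, T \in D -> ua (N_ E) (v E) (u T).
Proof.
move=> HS HD CD; have HC := sink_Eqc HS.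
rewrite coupled_oplusE eq_sym (negbTE CD) /=.
case/andP => _ /exists_inP [R RC /exists_inP [T TD pathRT]].
have [E EC uaE] := escape_lemma HS RC pathRT; exists E => // T' T'D.
have nET : ~~ sim u v E T.
  apply/negP => hs; move/negP: CD; apply; apply/eqP.
  by rewrite (Eqc_mem HC EC).1 (cls_eq hs) -(Eqc_mem HD TD).1.
exact: escape_class_transfer nET (Eqc_sim HD TD T'D) uaE.
Qed.

(* Distinct sinks are never in each other's coupled^oplus sets: otherwise an
   edge of each would be coupled with an edge of the other. *)
Lemma sinks_not_mutually_coupled C D : sink u v inc C -> sink u v inc D -> C != D ->
  D \in cop C -> C \notin cop D.
Proof.
move=> HS HT CD DinC; apply/negP => CinD.
have HC := sink_Eqc HS; have HD := sink_Eqc HT.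
have DC : D != C by rewrite eq_sym.
have [E EC hE] := coupled_oplus_escape HS HD CD DinC.
have [E' E'D hE'] := coupled_oplus_escape HT HC DC CinD.
have hs := coupled_sim (Eqc_mem HC EC).2 (Eqc_mem HD E'D).2 (hE E' E'D) (hE' E EC).
by move/eqP: CD; apply; rewrite (Eqc_mem HC EC).1 (Eqc_mem HD E'D).1 (cls_eq hs).
Qed.

(* A path leaving the class D and avoiding D^oplus that enters C^oplus puts C
   into coupled^oplus(D), since C^oplus is consistently reachable from every
   member of C. *)
Lemma coupled_oplus_back C D R y : C \in Classes -> C != D -> R \in D -> y \in Cop C ->
  ua (Cop D) (v R) y -> C \in cop D.
Proof.
move=> HC CD RD yC pathRy; have [S SC] := Eqc_n0 HC.
have uSy : ua (Cop D) (u S) y.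
  exact: cpath_avoid_Coplus ((CoplusP _ _ yC) S SC) (upath_avoid_end pathRy).
rewrite coupled_oplusE (negbTE CD) HC /=; apply/exists_inP; exists R => //.
by apply/exists_inP; exists S => //; exact: upath_avoid_trans pathRy (upath_avoid_sym uSy).
Qed.

(* A directed path starting at a vertex reached from the sink C avoiding
   C^oplus either enters C^oplus or ends at a vertex that is still reached
   from C avoiding C^oplus (inconsistent edges leaving C^oplus belong to C). *)
Lemma exit_oplus C R x y : sink u v inc C -> R \in C -> ua (Cop C) (v R) x -> dp x y ->
  y \in Cop C \/ exists2 R', R' \in C & ua (Cop C) (v R') y.
Proof.
move=> HS RC pathRx; apply: (@connect_ind_last _ _ x (fun y => y \in Cop C \/
  exists2 R', R' \in C & ua (Cop C) (v R') y)); first by right; exists R.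
move=> a b _ IH /dedgeP [F [uF vF]]; subst a b.
case: (boolP (v F \in Cop C)) => vFC; [by left | right].
case: IH => [uFC|[R' R'C pathR'F]].
  case iF: (inc F).
    by exists F; [exact: sink_absorbs HS iF uFC | exact: upath_avoid_refl].
  move/negP: vFC; case; apply: Coplus_closed uFC (connect1 _).
  by apply/cedgeP; exists F; rewrite iF.
by exists R' => //; apply: upath_avoid_step pathR'F (edge_uedge F) vFC.
Qed.

(* For distinct sinks with D in coupled^oplus(C), every class coupled to D is
   coupled to C: a path from D is prefixed by the path from C to D. *)
Lemma coupled_oplus_sub C D : sink u v inc C -> sink u v inc D -> C != D ->
  D \in cop C -> cop D \subset cop C.
Proof.
move=> HS HT CD DinC; have HC := sink_Eqc HS; have HD := sink_Eqc HT.
apply/subsetP => X; rewrite coupled_oplusE => /orP [/eqP -> //|].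
case/andP => HX /exists_inP [R' R'D /exists_inP [W WX pathR'W]].
rewrite coupled_oplusE HX /=; apply/orP; right.
move: (DinC); rewrite coupled_oplusE eq_sym (negbTE CD) /=.
case/andP => _ /exists_inP [R RC /exists_inP [T TD pathRT]].
have := Eqc_sim HD TD R'D; rewrite simE => /andP [dTR' _].
case: (exit_oplus HS RC pathRT dTR') => [uR'C|[R'' R''C pathR''R']].
  move/negP: CD; case; apply/eqP.
  exact: Eqc_eq HC HD (sink_absorbs HS (Eqc_mem HD R'D).2 uR'C) R'D.
have avoidC : forall z, ua (Cop D) (v R') z -> z \notin Cop C.
  move=> z pathz; apply/negP => zC; move/negP: (sinks_not_mutually_coupled HS HT CD DinC).
  by apply; exact: coupled_oplus_back HC CD R'D zC pathz.
have vR'C : v R' \notin Cop C.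
  by apply: avoidC; apply: upath_avoid_refl; move: pathR'W; rewrite upath_avoidE => /andP [].
apply/exists_inP; exists R'' => //; apply/exists_inP; exists W => //.
apply: upath_avoid_trans (upath_avoid_step pathR''R' (edge_uedge R') vR'C) _.
exact: upath_avoid_transfer pathR'W avoidC.
Qed.

End QueryGraphTheory.

Theorem theorem5p3 (V A : finType) (u v : A -> V) (inc : pred A)
  (Huv : forall R : A, u R != v R)
  (Hsplit : splittable u v inc)
  (Hfc : f_closed u v inc)
  (Hne : exists R : A, inc R)
  (Csep : {set A})
  (Hsink : sink u v inc Csep)
  (Hmin : forall C : {set A}, sink u v inc C ->
     #|coupled_oplus u v inc Csep| <= #|coupled_oplus u v inc C|) :
  separator u v inc Csep.
Proof.
rewrite /separator Hsink /=; apply/forall_inP => C2 C2in; apply/implyP => C2ne.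
apply/negPn/negP => not_below.
have [D [sinkD CD DinC]] := offending_sink Hsink C2in C2ne not_below.
have sub := coupled_oplus_sub Hsplit Hfc Hsink sinkD CD DinC.
have notin := sinks_not_mutually_coupled Hsplit Hfc Hsink sinkD CD DinC.
have := Hmin D sinkD; apply/negP; rewrite -ltnNge; apply: proper_card.
by apply/properP; split => //; exists Csep => //; rewrite coupled_oplusE eqxx.
Qed.
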